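(* Let $K\in\mathbb{N}^+$, let $a_1,\dots,a_K\in\mathbb{R}$ be rationally independent, and let $g:\mathbb{R}\to\mathbb{R}$ be periodic with period $T$, i.e. $g(x+T)=g(x)$ for all $x$. Assume there exist $x_1,x_2\in\mathbb{R}$ with $0<x_2-x_1<T$ such that $g$ is continuous on $[x_1,x_2]$, and set $M_1=\min_{x\in[x_1,x_2]}g(x)$, $M_2=\max_{x\in[x_1,x_2]}g(x)$. Then the set $\{[g(wa_1),g(wa_2),\dots,g(wa_K)]^T: w\in\mathbb{R}\}$ is dense in $[M_1,M_2]^K$, i.e., for every $\boldsymbol{\xi}\in[M_1,M_2]^K$ and every $\varepsilon>0$ there is $w\in\mathbb{R}$ with $\max_{k}|g(wa_k)-\xi_k|<\varepsilon$.
   Context: Real numbers $a_1,\dots,a_K$ are rationally independent if whenever $\lambda_1,\dots,\lambda_K\in\mathbb{Q}$ satisfy $\sum_{k=1}^K\lambda_k a_k=0$, then $\lambda_1=\dots=\lambda_K=0$. *)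

From Stdlib Require Import Reals QArith Qreals.
Open Scope R_scope.

Definition rat_independent (K : nat) (a : nat -> R) : Prop :=
  forall lam : nat -> Q,
    sum_f_R0 (fun k => Q2R (lam k) * a k) (K - 1)%nat = 0 ->
    forall k, (k < K)%nat -> Q2R (lam k) = 0.

Definition continuous_on_interval (g : R -> R) (x1 x2 : R) : Prop :=
  forall x, x1 <= x <= x2 ->
    forall eps, eps > 0 -> exists delta, delta > 0 /\
      forall y, x1 <= y <= x2 -> Rabs (y - x) < delta -> Rabs (g y - g x) < eps.

From Stdlib Require Import Reals QArith Qreals.
From Stdlib Require Import Lra Lia ZArith Classical FunctionalExtensionality.
Open Scope R_scope.

(* Dividing by [a 0] reduces the claim to Kronecker's theorem: if [1, b_0, ..., b_(d-1)] are
   rationally independent, the orbit [(m b_k + z_k)_k], [m : nat], comes arbitrarily close to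
   [Z^d]. Along such an orbit the averages of a trigonometric polynomial tend to its constant
   term, since every nonconstant wave sums to a bounded progression. Apply this to
   [F = (prod_k cos^2 (pi x_k))^N]: if the orbit stayed [δ]-away from [Z^d], then [F <= r^N]
   on it with [r = cos^2 (pi δ) < 1], so the mean of [F] is at most [r^N]; but the sum of the
   [n^d] translates of [F] along the grid [(Z/n)^d] is at least [q^(dN)] everywhere, with
   [q = cos^2 (pi / 2n)] and [q^d > r] for [n] large, so [n^d] times the mean of [F] is at least
   [q^(dN)], which fails for [N] large.
   For the theorem itself, the intermediate value theorem gives targets [t_k] in the open
   interval [(x1, x2)] with [g t_k] close to [xi_k]; Kronecker gives [w] with [w a_k] close to
   [t_k] modulo [T], and periodicity and continuity of [g] conclude. *)

Fixpoint sum_lt (f : nat -> R) (n : nat) : R :=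
  match n with O => 0 | S n' => sum_lt f n' + f n' end.

Lemma sum_lt_ext f g n : (forall i, (i < n)%nat -> f i = g i) -> sum_lt f n = sum_lt g n.
Proof. induction n as [|n IH]; intros H; simpl; auto. rewrite IH, H; auto; intros; apply H; lia. Qed.

Lemma sum_lt_add f g n : sum_lt (fun i => f i + g i) n = sum_lt f n + sum_lt g n.
Proof. induction n as [|n IH]; simpl; [lra|]. rewrite IH; lra. Qed.

Lemma sum_lt_scal a f n : sum_lt (fun i => a * f i) n = a * sum_lt f n.
Proof. induction n as [|n IH]; simpl; [lra|]. rewrite IH; lra. Qed.

Lemma sum_lt_const c n : sum_lt (fun _ => c) n = INR n * c.
Proof. induction n as [|n IH]; simpl sum_lt; [simpl; lra|]. rewrite IH, S_INR; lra. Qed.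

Lemma sum_lt_zero f n : (forall i, (i < n)%nat -> f i = 0) -> sum_lt f n = 0.
Proof. intros H. rewrite (sum_lt_ext f (fun _ => 0)), sum_lt_const by auto. lra. Qed.

Lemma sum_lt_le f g n : (forall i, (i < n)%nat -> f i <= g i) -> sum_lt f n <= sum_lt g n.
Proof.
  induction n as [|n IH]; simpl; intros H; [lra|].
  assert (f n <= g n) by (apply H; lia).
  assert (sum_lt f n <= sum_lt g n) by (apply IH; intros; apply H; lia). lra.
Qed.

Lemma sum_lt_ge_term f n j : (forall i, (i < n)%nat -> 0 <= f i) -> (j < n)%nat -> f j <= sum_lt f n.
Proof.
  induction n as [|n IH]; simpl; intros H Hj; [lia|].
  assert (0 <= sum_lt f n).
  { rewrite <- (Rmult_0_r (INR n)), <- sum_lt_const. apply sum_lt_le; intros; apply H; lia. }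
  assert (0 <= f n) by (apply H; lia).
  destruct (Nat.eq_dec j n) as [->|]; [lra|].
  assert (f j <= sum_lt f n) by (apply IH; [intros; apply H|]; lia). lra.
Qed.

Lemma sum_lt_succ_l f n : sum_lt f (S n) = f O + sum_lt (fun k => f (S k)) n.
Proof. induction n as [|n IH]; [simpl; ring|]. simpl in *. rewrite IH. ring. Qed.

Lemma sum_f_R0_sum_lt f n : sum_f_R0 f n = sum_lt f (S n).
Proof. induction n as [|n IH]; simpl in *; [ring|]. rewrite IH. ring. Qed.

Definition zdot (d : nat) (c : nat -> Z) (x : nat -> R) : R :=
  sum_lt (fun k => IZR (c k) * x k) d.

Definition zvec_nonzero (d : nat) (c : nat -> Z) : Prop :=
  exists k, (k < d)%nat /\ c k <> 0%Z.

Lemma zdot_scal d c a x : zdot d c (fun k => a * x k) = a * zdot d c x.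
Proof. unfold zdot. rewrite <- sum_lt_scal. apply sum_lt_ext; intros; ring. Qed.

Lemma zdot_add d c u v : zdot d c (fun k => u k + v k) = zdot d c u + zdot d c v.
Proof. unfold zdot. rewrite <- sum_lt_add. apply sum_lt_ext; intros; ring. Qed.

Lemma zdot_add_l d c1 c2 x : zdot d (fun k => (c1 k + c2 k)%Z) x = zdot d c1 x + zdot d c2 x.
Proof. unfold zdot. induction d as [|d IH]; simpl; [ring|]. rewrite IH, plus_IZR. ring. Qed.

Lemma zdot_sub_l d c1 c2 x : zdot d (fun k => (c1 k - c2 k)%Z) x = zdot d c1 x - zdot d c2 x.
Proof. unfold zdot. induction d as [|d IH]; simpl; [ring|]. rewrite IH, minus_IZR. ring. Qed.

Lemma zdot_zero d c x : ~ zvec_nonzero d c -> zdot d c x = 0.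
Proof.
  intros Hc. apply sum_lt_zero; intros k Hk.
  destruct (Z.eq_dec (c k) 0) as [->|Hck]; [ring|]. exfalso; apply Hc; exists k; auto.
Qed.

Definition zunit (j : nat) : nat -> Z := fun k => if Nat.eqb k j then 1%Z else 0%Z.

Lemma zdot_zunit d j x : (j < d)%nat -> zdot d (zunit j) x = x j.
Proof.
  unfold zdot, zunit. induction d as [|d IH]; intros Hj; [lia|]. simpl.
  destruct (Nat.eqb_spec d j) as [->|Hdj].
  - rewrite sum_lt_zero; [ring|]. intros i Hi. destruct (Nat.eqb_spec i j); [lia|ring].
  - rewrite IH by lia. ring.
Qed.

Lemma zvec_nonzero_zunit d j : (j < d)%nat -> zvec_nonzero d (zunit j).
Proof. exists j. unfold zunit. rewrite Nat.eqb_refl. split; [auto|lia]. Qed.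

(* [trig_poly d F mu]: [F] is a real trigonometric polynomial on the torus [R^d / Z^d]
   whose constant term (its mean) is [mu]. *)
Inductive trig_poly (d : nat) : ((nat -> R) -> R) -> R -> Prop :=
| trig_poly_const r : trig_poly d (fun _ => r) r
| trig_poly_wave r c phi : zvec_nonzero d c ->
    trig_poly d (fun x => r * cos (2 * PI * zdot d c x + phi)) 0
| trig_poly_add F G mu nu : trig_poly d F mu -> trig_poly d G nu ->
    trig_poly d (fun x => F x + G x) (mu + nu)
| trig_poly_ext F G mu : (forall x, F x = G x) -> trig_poly d F mu -> trig_poly d G mu.

Section TrigPoly.

Variable d : nat.

Lemma trig_poly_wave_any r c phi :
  exists mu, trig_poly d (fun x => r * cos (2 * PI * zdot d c x + phi)) mu.
Proof.
  destruct (classic (zvec_nonzero d c)) as [Hc|Hc].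
  - exists 0; constructor; auto.
  - exists (r * cos phi). apply trig_poly_ext with (fun _ => r * cos phi); [|constructor].
    intros x. rewrite zdot_zero by auto. f_equal; f_equal; ring.
Qed.

Lemma trig_poly_shift F mu v : trig_poly d F mu -> trig_poly d (fun x => F (fun k => x k + v k)) mu.
Proof.
  induction 1.
  - constructor.
  - apply trig_poly_ext with (fun x => r * cos (2 * PI * zdot d c x + (2 * PI * zdot d c v + phi))).
    + intros x. rewrite zdot_add. f_equal; f_equal; ring.
    + constructor; auto.
  - apply trig_poly_add; auto.
  - apply trig_poly_ext with (fun x => F (fun k => x k + v k)); auto.
Qed.

Lemma trig_poly_scal F mu a : trig_poly d F mu -> trig_poly d (fun x => a * F x) (a * mu).
Proof.
  induction 1.
  - constructor.
  - rewrite Rmult_0_r. apply trig_poly_ext with (fun x => (a * r) * cos (2 * PI * zdot d c x + phi)).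
    + intros; ring.
    + constructor; auto.
  - rewrite Rmult_plus_distr_l. apply trig_poly_ext with (fun x => a * F x + a * G x).
    + intros; ring.
    + constructor; auto.
  - apply trig_poly_ext with (fun x => a * F x); auto. intros x; rewrite H; auto.
Qed.

(* Product-to-sum: a product of two waves is a sum of waves with frequencies [c1 + c2], [c1 - c2]. *)
Lemma trig_poly_wave_mul r c phi G nu : trig_poly d G nu ->
  exists mu, trig_poly d (fun x => r * cos (2 * PI * zdot d c x + phi) * G x) mu.
Proof.
  induction 1 as [s|s c2 phi2 _|F G mu nu _ [l1 H1] _ [l2 H2]|F G mu HFG _ [l H]].
  - destruct (trig_poly_wave_any (r * s) c phi) as [l Hl]. exists l.
    eapply trig_poly_ext; [|exact Hl]. intros; simpl; ring.
  - destruct (trig_poly_wave_any (r * s / 2) (fun k => (c k + c2 k)%Z) (phi + phi2)) as [l1 H1].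
    destruct (trig_poly_wave_any (r * s / 2) (fun k => (c k - c2 k)%Z) (phi - phi2)) as [l2 H2].
    exists (l1 + l2). eapply trig_poly_ext; [|apply trig_poly_add; [exact H1|exact H2]].
    intros x; simpl. rewrite zdot_add_l, zdot_sub_l.
    set (A := 2 * PI * zdot d c x + phi); set (B := 2 * PI * zdot d c2 x + phi2).
    replace (2 * PI * (zdot d c x + zdot d c2 x) + (phi + phi2)) with (A + B) by (unfold A, B; ring).
    replace (2 * PI * (zdot d c x - zdot d c2 x) + (phi - phi2)) with (A - B) by (unfold A, B; ring).
    rewrite cos_plus, cos_minus. field.
  - exists (l1 + l2). eapply trig_poly_ext; [|apply trig_poly_add; [exact H1|exact H2]].
    intros; simpl; ring.
  - exists l. eapply trig_poly_ext; [|exact H]. intros; simpl; rewrite HFG; auto.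
Qed.

Lemma trig_poly_mul F mu G nu : trig_poly d F mu -> trig_poly d G nu ->
  exists l, trig_poly d (fun x => F x * G x) l.
Proof.
  intros HF HG. induction HF as [r|r c phi _|F1 F2 mu1 mu2 _ [l1 H1] _ [l2 H2]|F1 F2 mu1 HF _ [l H]].
  - exists (r * nu). apply trig_poly_scal; auto.
  - apply trig_poly_wave_mul with nu; auto.
  - exists (l1 + l2). eapply trig_poly_ext; [|apply trig_poly_add; [exact H1|exact H2]].
    intros; simpl; ring.
  - exists l. eapply trig_poly_ext; [|exact H]. intros; simpl; rewrite HF; auto.
Qed.

Lemma trig_poly_pow F mu N : trig_poly d F mu -> exists l, trig_poly d (fun x => F x ^ N) l.
Proof.
  intros HF. induction N as [|N [l Hl]].
  - exists 1. apply trig_poly_ext with (fun _ => 1); [reflexivity|constructor].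
  - exact (trig_poly_mul F mu (fun x => F x ^ N) l HF Hl).
Qed.

Lemma trig_poly_sum (F : nat -> (nat -> R) -> R) mu n :
  (forall i, (i < n)%nat -> trig_poly d (F i) (mu i)) ->
  trig_poly d (fun x => sum_lt (fun i => F i x) n) (sum_lt mu n).
Proof.
  induction n as [|n IH]; intros H; simpl; [constructor|].
  apply trig_poly_add; [apply IH; intros|apply H]; auto.
Qed.

End TrigPoly.

Definition nonresonant (d : nat) (b : nat -> R) : Prop :=
  forall c, zvec_nonzero d c -> forall n : Z, zdot d c b <> IZR n.

Lemma cos_progression_telescope th psi M :
  2 * sin (PI * th) * sum_lt (fun m => cos (2 * PI * (INR m * th) + psi)) M =
  sin (2 * PI * (INR M * th) + psi - PI * th) - sin (psi - PI * th).
Proof.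
  induction M as [|M IH]; simpl sum_lt.
  - simpl INR. replace (2 * PI * (0 * th) + psi - PI * th) with (psi - PI * th) by ring. ring.
  - rewrite Rmult_plus_distr_l, IH, S_INR.
    set (A := 2 * PI * (INR M * th) + psi).
    replace (2 * PI * ((INR M + 1) * th) + psi - PI * th) with (A + PI * th) by (unfold A; ring).
    rewrite sin_plus, sin_minus. ring.
Qed.

Lemma cos_progression_bounded th psi M : sin (PI * th) <> 0 ->
  Rabs (sum_lt (fun m => cos (2 * PI * (INR m * th) + psi)) M) <= 1 / Rabs (sin (PI * th)).
Proof.
  intros Hs. pose proof (Rabs_pos_lt _ Hs) as Hpos.
  set (S := sum_lt _ M).
  assert (H2 : 2 * (Rabs (sin (PI * th)) * Rabs S) <= 2).
  { replace 2 with (Rabs 2) at 1 by (apply Rabs_pos_eq; lra).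
    rewrite <- !Rabs_mult, <- Rmult_assoc. unfold S. rewrite cos_progression_telescope.
    eapply Rle_trans; [apply Rabs_triang|]. rewrite Rabs_Ropp.
    assert (Rabs (sin (2 * PI * (INR M * th) + psi - PI * th)) <= 1) by apply Rabs_le, SIN_bound.
    assert (Rabs (sin (psi - PI * th)) <= 1) by apply Rabs_le, SIN_bound. lra. }
  apply (Rmult_le_reg_l (Rabs (sin (PI * th)))); auto.
  replace (Rabs (sin (PI * th)) * (1 / Rabs (sin (PI * th)))) with 1 by (field; lra). lra.
Qed.

Lemma le_of_linear_bound mu s C : (forall M : nat, INR M * mu <= INR M * s + C) -> mu <= s.
Proof.
  intros H. apply Rnot_lt_le. intros Hlt.
  destruct (INR_archimed (mu - s) C) as [M HM]; [lra|].
  specialize (H M). lra.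
Qed.

Section OrbitAverages.

Variables (d : nat) (b : nat -> R).
Hypothesis Hb : nonresonant d b.

Lemma trig_poly_orbit_sum_bounded F mu z : trig_poly d F mu -> exists C, forall M,
  Rabs (sum_lt (fun m => F (fun k => INR m * b k + z k)) M - INR M * mu) <= C.
Proof.
  induction 1 as [r|r c phi Hc|F G mu nu _ [C1 H1] _ [C2 H2]|F G mu HFG _ [C H]].
  - exists 0; intros M. rewrite sum_lt_const, Rminus_diag, Rabs_R0. lra.
  - set (th := zdot d c b).
    assert (Hs : sin (PI * th) <> 0).
    { intros E. destruct (sin_eq_0_0 _ E) as [k Hk]. apply (Hb c Hc k).
      apply (Rmult_eq_reg_l PI); [fold th; rewrite Hk; ring|apply PI_neq0]. }
    exists (Rabs r * (1 / Rabs (sin (PI * th)))). intros M.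
    rewrite (sum_lt_ext _ (fun m => r * cos (2 * PI * (INR m * th) + (2 * PI * zdot d c z + phi)))).
    + rewrite sum_lt_scal, Rmult_0_r, Rminus_0_r, Rabs_mult.
      apply Rmult_le_compat_l; [apply Rabs_pos|]. apply cos_progression_bounded; auto.
    + intros i _. rewrite zdot_add, zdot_scal. unfold th. f_equal. f_equal. ring.
  - exists (C1 + C2). intros M. rewrite sum_lt_add, Rmult_plus_distr_l.
    specialize (H1 M); specialize (H2 M).
    match goal with |- Rabs (?a + ?b - (?c + ?e)) <= _ =>
      replace (a + b - (c + e)) with ((a - c) + (b - e)) by ring end.
    eapply Rle_trans; [apply Rabs_triang|]. lra.
  - exists C; intros M. rewrite (sum_lt_ext _ (fun m => F (fun k => INR m * b k + z k))); auto.
Qed.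

Lemma trig_poly_mean_le F mu z s : trig_poly d F mu ->
  (forall m : nat, F (fun k => INR m * b k + z k) <= s) -> mu <= s.
Proof.
  intros HF Hs. destruct (trig_poly_orbit_sum_bounded F mu z HF) as [C HC].
  apply (le_of_linear_bound mu s C). intros M.
  specialize (HC M). rewrite Rabs_minus_sym in HC.
  pose proof (Rle_trans _ _ _ (Rle_abs _) HC).
  assert (sum_lt (fun m => F (fun k => INR m * b k + z k)) M <= INR M * s).
  { rewrite <- sum_lt_const. apply sum_lt_le; auto. }
  lra.
Qed.

Lemma trig_poly_mean_ge F mu z s : trig_poly d F mu ->
  (forall m : nat, s <= F (fun k => INR m * b k + z k)) -> s <= mu.
Proof.
  intros HF Hs. assert (-1 * mu <= -1 * s); [|lra].
  apply (trig_poly_mean_le (fun x => -1 * F x) (-1 * mu) z); [apply trig_poly_scal; auto|].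
  intros m. specialize (Hs m). lra.
Qed.

End OrbitAverages.

Lemma finite_choice {A : Type} (a0 : A) (P : nat -> A -> Prop) n :
  (forall k, (k < n)%nat -> exists x, P k x) -> exists f : nat -> A, forall k, (k < n)%nat -> P k (f k).
Proof.
  induction n as [|n IH]; intros H.
  - exists (fun _ => a0); intros; lia.
  - destruct IH as [f Hf]; [intros; apply H; lia|]. destruct (H n) as [x Hx]; [lia|].
    exists (fun k => if Nat.eqb k n then x else f k). intros k Hk.
    destruct (Nat.eqb_spec k n) as [->|]; [auto|apply Hf; lia].
Qed.

Lemma periodic_nat (g : R -> R) T : (forall x, g (x + T) = g x) ->
  forall (n : nat) x, g (x + INR n * T) = g x.
Proof.
  intros H n; induction n as [|n IH]; intros x.
  - simpl. rewrite Rmult_0_l, Rplus_0_r; auto.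
  - rewrite S_INR. replace (x + (INR n + 1) * T) with ((x + INR n * T) + T) by ring. rewrite H; auto.
Qed.

Lemma periodic_Z (g : R -> R) T : (forall x, g (x + T) = g x) ->
  forall (n : Z) x, g (x + IZR n * T) = g x.
Proof.
  intros H n x. destruct (Z_le_gt_dec 0 n).
  - rewrite <- (Z2Nat.id n), <- INR_IZR_INZ by auto. apply periodic_nat; auto.
  - replace n with (- Z.of_nat (Z.to_nat (- n)))%Z by lia. rewrite opp_IZR, <- INR_IZR_INZ.
    rewrite <- (periodic_nat g T H (Z.to_nat (- n)) (x + - INR (Z.to_nat (- n)) * T)). f_equal; ring.
Qed.

Lemma nearest_Z x : exists p : Z, Rabs (x - IZR p) <= 1/2.
Proof.
  destruct (archimed (x + 1/2)) as [H1 H2]. exists (up (x + 1/2) - 1)%Z.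
  rewrite minus_IZR. apply Rabs_le. lra.
Qed.

Definition bump (t : R) : R := (1 + cos (2 * PI * t)) / 2.

Lemma bump_bounds t : 0 <= bump t <= 1.
Proof. unfold bump; destruct (COS_bound (2 * PI * t)); lra. Qed.

Lemma bump_0 : bump 0 = 1.
Proof. unfold bump. rewrite Rmult_0_r, cos_0. lra. Qed.

Lemma bump_periodic_Z (n : Z) x : bump (x + IZR n) = bump x.
Proof.
  rewrite <- (Rmult_1_r (IZR n)). apply periodic_Z. intros y. unfold bump.
  replace (2 * PI * (y + 1)) with (2 * PI * y + 2 * INR 1 * PI) by (simpl; ring).
  rewrite cos_period; auto.
Qed.

Lemma bump_antitone_abs y y' : Rabs y <= Rabs y' <= 1/2 -> bump y' <= bump y.
Proof.
  intros [H H']. pose proof PI_RGT_0. pose proof (Rabs_pos y).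
  assert (Habs : forall t, bump t = bump (Rabs t)).
  { intros t. unfold bump. destruct (Rcase_abs t).
    - rewrite Rabs_left, <- (cos_neg (2 * PI * - t)) by auto. f_equal; f_equal; f_equal; ring.
    - rewrite Rabs_right; auto. }
  rewrite (Habs y), (Habs y'). unfold bump. apply Rmult_le_compat_r; [lra|].
  apply Rplus_le_compat_l, cos_decr_1; nra.
Qed.

Lemma bump_lt_1 t : 0 < t <= 1/2 -> bump t < 1.
Proof.
  intros Ht. pose proof PI_RGT_0. unfold bump.
  assert (cos (2 * PI * t) < cos 0) by (apply cos_decreasing_1; nra). rewrite cos_0 in *. lra.
Qed.

Lemma bump_far x δ : 0 <= δ -> (forall n : Z, δ <= Rabs (x - IZR n)) -> bump x <= bump δ.
Proof.
  intros Hδ Hfar. destruct (nearest_Z x) as [p Hp].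
  replace x with ((x - IZR p) + IZR p) by ring. rewrite bump_periodic_Z.
  apply bump_antitone_abs. rewrite Rabs_pos_eq by auto. auto.
Qed.

Lemma bump_near_grid x n : (0 < n)%nat ->
  exists i, (i < n)%nat /\ bump (/ (2 * INR n)) <= bump (x + INR i / INR n).
Proof.
  intros Hn. assert (Hn' : 0 < INR n) by (apply lt_0_INR; auto).
  destruct (nearest_Z (INR n * x)) as [p Hp].
  set (nz := Z.of_nat n).
  pose proof (Z.mod_pos_bound (- p) nz ltac:(lia)) as Hi.
  pose proof (Z.div_mod (- p) nz ltac:(lia)) as Hdm.
  set (i := ((- p) mod nz)%Z) in *; set (q := ((- p) / nz)%Z) in *.
  exists (Z.to_nat i). split; [lia|].
  rewrite (INR_IZR_INZ (Z.to_nat i)), Z2Nat.id by lia.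
  assert (Hi' : IZR i = - IZR p - INR n * IZR q).
  { rewrite INR_IZR_INZ, <- mult_IZR, <- opp_IZR, <- minus_IZR. f_equal. fold nz. lia. }
  replace (x + IZR i / INR n) with ((INR n * x - IZR p) / INR n + IZR (- q)).
  2: { rewrite Hi', opp_IZR. field. lra. }
  rewrite bump_periodic_Z. apply bump_antitone_abs.
  assert (1 <= INR n) by (apply (le_INR 1); lia).
  assert (Hu : 0 < / INR n <= 1).
  { split; [apply Rinv_0_lt_compat; lra|rewrite <- Rinv_1; apply Rinv_le_contravar; lra]. }
  unfold Rdiv. rewrite Rabs_mult, Rinv_mult, (Rabs_pos_eq (/ INR n)), (Rabs_pos_eq (/ 2 * / INR n)) by nra.
  split; nra.
Qed.

Fixpoint bump_prod (j : nat) (x : nat -> R) : R :=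
  match j with O => 1 | S j' => bump_prod j' x * bump (x j') end.

Lemma bump_prod_bounds j x : 0 <= bump_prod j x <= 1.
Proof. induction j; simpl; [lra|]. destruct (bump_bounds (x j)). nra. Qed.

Lemma bump_prod_le_factor j x r : 0 <= r ->
  (exists k, (k < j)%nat /\ bump (x k) <= r) -> bump_prod j x <= r.
Proof.
  induction j as [|j IH]; intros Hr [k [Hk Hkr]]; [lia|]. simpl.
  destruct (bump_bounds (x j)), (bump_prod_bounds j x).
  destruct (Nat.eq_dec k j) as [->|]; [nra|].
  assert (bump_prod j x <= r) by (apply IH; [|exists k; split]; auto; lia). nra.
Qed.

Lemma bump_prod_le_far d x δ : 0 <= δ ->
  ~ (forall k, (k < d)%nat -> exists n : Z, Rabs (x k - IZR n) < δ) -> bump_prod d x <= bump δ.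
Proof.
  intros Hδ Hfar. apply bump_prod_le_factor; [apply bump_bounds|].
  apply NNPP. intros Hnear. apply Hfar. intros k Hk.
  apply NNPP. intros Hk'. apply Hnear. exists k. split; auto.
  apply bump_far; auto. intros p. apply Rnot_lt_le. intros Hp. apply Hk'. exists p. auto.
Qed.

Lemma bump_prod_ge_pow j x q : 0 <= q -> (forall k, (k < j)%nat -> q <= bump (x k)) ->
  q ^ j <= bump_prod j x.
Proof.
  induction j as [|j IH]; intros Hq H; simpl; [lra|]. rewrite Rmult_comm.
  apply Rmult_le_compat; auto using pow_le.
Qed.

Lemma trig_poly_bump d j : (j < d)%nat -> trig_poly d (fun x => bump (x j)) (1/2).
Proof.
  intros Hj. rewrite <- (Rplus_0_r (1/2)).
  apply trig_poly_ext with (fun x => 1/2 + (1/2) * cos (2 * PI * zdot d (zunit j) x + 0)).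
  - intros x. rewrite zdot_zunit by auto. unfold bump. rewrite Rplus_0_r. field.
  - apply (trig_poly_add d (fun _ => 1/2)); constructor. apply zvec_nonzero_zunit; auto.
Qed.

Lemma trig_poly_bump_prod d j : (j <= d)%nat -> exists mu, trig_poly d (bump_prod j) mu.
Proof.
  induction j as [|j IH]; intros Hj.
  - exists 1. apply trig_poly_ext with (fun _ => 1); [reflexivity|constructor].
  - destruct IH as [mu Hmu]; [lia|].
    exact (trig_poly_mul d _ _ _ _ Hmu (trig_poly_bump d j Hj)).
Qed.

(* [grid_sum n j H x] sums [H] over the [n ^ j] translates of [x] by the vectors
   [(i_0/n, ..., i_(j-1)/n, 0, 0, ...)] with [i_k < n]. *)
Fixpoint grid_sum (n j : nat) (H : (nat -> R) -> R) (x : nat -> R) : R :=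
  match j with
  | O => H x
  | S j' => sum_lt (fun i =>
      grid_sum n j' H (fun k => x k + (if Nat.eqb k j' then INR i / INR n else 0))) n
  end.

Lemma trig_poly_grid_sum d n H mu j : trig_poly d H mu -> trig_poly d (grid_sum n j H) (INR n ^ j * mu).
Proof.
  intros HH. induction j as [|j IH]; simpl.
  - rewrite Rmult_1_l. exact HH.
  - replace (INR n * INR n ^ j * mu) with (sum_lt (fun _ => INR n ^ j * mu) n)
      by (rewrite sum_lt_const; ring).
    apply (trig_poly_sum d (fun i x => grid_sum n j H
      (fun k => x k + (if Nat.eqb k j then INR i / INR n else 0)))).
    intros i _. apply trig_poly_shift; auto.
Qed.

Lemma grid_sum_nonneg n j H x : (forall y, 0 <= H y) -> 0 <= grid_sum n j H x.
Proof.
  revert x; induction j as [|j IH]; intros x HH; simpl; auto.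
  rewrite <- (Rmult_0_r (INR n)), <- sum_lt_const. apply sum_lt_le; auto.
Qed.

Lemma grid_sum_ge_term n j H (idx : nat -> nat) x : (forall y, 0 <= H y) ->
  (forall k, (k < j)%nat -> (idx k < n)%nat) ->
  H (fun k => x k + (if Nat.ltb k j then INR (idx k) / INR n else 0)) <= grid_sum n j H x.
Proof.
  intros HH; revert x; induction j as [|j IH]; intros x Hidx; simpl.
  - right. f_equal. apply functional_extensionality; intros k. apply Rplus_0_r.
  - eapply Rle_trans; [|apply (sum_lt_ge_term _ n (idx j))];
      [|intros; apply grid_sum_nonneg; auto|apply Hidx; lia].
    eapply Rle_trans; [|apply IH; intros; apply Hidx; lia].
    right. f_equal. apply functional_extensionality; intros k.
    destruct (Nat.ltb_spec k (S j)), (Nat.ltb_spec k j), (Nat.eqb_spec k j); subst; try lia; ring.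
Qed.

Lemma grid_sum_bump_prod_pow_ge n d N y : (0 < n)%nat ->
  (bump (/ (2 * INR n)) ^ d) ^ N <= grid_sum n d (fun x => bump_prod d x ^ N) y.
Proof.
  intros Hn.
  destruct (finite_choice O (fun k i => (i < n)%nat /\
      bump (/ (2 * INR n)) <= bump (y k + INR i / INR n)) d) as [idx Hidx].
  { intros k _. apply bump_near_grid; auto. }
  eapply Rle_trans; [|apply grid_sum_ge_term with (idx := idx)];
    [|intros; apply pow_le, bump_prod_bounds|intros k Hk; apply Hidx; auto].
  apply pow_incr. split; [apply pow_le, bump_bounds|].
  apply bump_prod_ge_pow; [apply bump_bounds|]. intros k Hk.
  destruct (Nat.ltb_spec k d); [apply Hidx; auto|lia].
Qed.

Lemma exists_fine_grid d r : r < 1 -> exists n, (0 < n)%nat /\ r < bump (/ (2 * INR n)) ^ d.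
Proof.
  intros Hr.
  assert (Hc : continuity_pt (fun t => bump t ^ d) 0) by (unfold bump; reg).
  destruct (Hc (1 - r)) as [α [Hα Hnear]]; [lra|].
  destruct (archimed_cor1 α Hα) as [n [Hnα Hn]].
  assert (0 < INR n) by (apply lt_0_INR; auto).
  exists n. split; auto.
  assert (Hpos : 0 < / (2 * INR n)) by (apply Rinv_0_lt_compat; lra).
  specialize (Hnear (/ (2 * INR n))). simpl in Hnear. unfold R_dist in Hnear.
  rewrite bump_0, pow1, Rminus_0_r, Rabs_pos_eq in Hnear by lra.
  assert (Hd : Rabs (bump (/ (2 * INR n)) ^ d - 1) < 1 - r).
  { apply Hnear. split; [split; [exact I|lra]|].
    rewrite Rinv_mult. assert (/ INR n > 0) by (apply Rinv_0_lt_compat; lra). lra. }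
  apply Rabs_def2 in Hd. lra.
Qed.

Lemma exists_pow_ratio_gt C r Q : 0 <= r < Q -> exists N, C * r ^ N < Q ^ N.
Proof.
  intros Hr. assert (HQ : 0 < Q) by lra.
  set (s := r / Q).
  assert (Hs : 0 <= s < 1).
  { unfold s, Rdiv. pose proof (Rinv_0_lt_compat Q HQ).
    split; [nra|]. apply (Rmult_lt_reg_r Q); auto. rewrite Rmult_assoc, Rinv_l; lra. }
  pose proof (Rle_abs C). pose proof (Rabs_pos C).
  destruct (pow_lt_1_zero s) with (y := / (Rabs C + 1)) as [N HN].
  { rewrite Rabs_pos_eq; lra. }
  { apply Rinv_0_lt_compat. lra. }
  exists N. specialize (HN N (le_n N)).
  assert (HsN : 0 <= s ^ N) by (apply pow_le; lra).
  rewrite Rabs_pos_eq in HN by auto.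
  assert (HC1 : C * s ^ N < 1).
  { apply Rmult_lt_compat_l with (r := Rabs C + 1) in HN; [|lra].
    rewrite Rinv_r in HN by lra. nra. }
  assert (E : r ^ N = s ^ N * Q ^ N) by (unfold s; rewrite <- Rpow_mult_distr; f_equal; field; lra).
  rewrite E. pose proof (pow_lt Q N HQ). nra.
Qed.

Theorem kronecker d b : nonresonant d b -> forall (z : nat -> R) δ, 0 < δ ->
  exists m : nat, forall k, (k < d)%nat -> exists n : Z, Rabs (INR m * b k + z k - IZR n) < δ.
Proof.
  intros Hb z δ Hδ.
  set (δ' := Rmin δ (1/2)).
  assert (Hδ' : 0 < δ' <= 1/2) by (split; [apply Rmin_glb_lt|apply Rmin_r]; lra).
  assert (Hδδ' : δ' <= δ) by apply Rmin_l.
  set (r := bump δ').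
  assert (Hr : 0 <= r < 1) by (split; [apply bump_bounds|apply bump_lt_1; auto]).
  destruct (exists_fine_grid d r) as [n [Hn HQ]]; [lra|].
  set (Q := bump (/ (2 * INR n)) ^ d) in HQ.
  destruct (exists_pow_ratio_gt (INR n ^ d) r Q) as [N HN]; [lra|].
  set (F := fun x => bump_prod d x ^ N).
  destruct (trig_poly_bump_prod d d (le_n d)) as [mu0 HP].
  destruct (trig_poly_pow d _ _ N HP) as [mu HF]. fold F in HF.
  destruct (classic (exists m : nat, forall k, (k < d)%nat ->
    exists n : Z, Rabs (INR m * b k + z k - IZR n) < δ)) as [|Hno]; [assumption|exfalso].
  (* If every point of the orbit has a coordinate far from Z, then [F <= r ^ N] along it,
     while translating [F] over the grid gives a function [>= Q ^ N] everywhere. *)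
  assert (Hup : mu <= r ^ N).
  { apply (trig_poly_mean_le d b Hb F mu z); auto. intros m.
    apply pow_incr. split; [apply bump_prod_bounds|].
    apply bump_prod_le_far; [lra|]. intros Hnear. apply Hno. exists m. intros k Hk.
    destruct (Hnear k Hk) as [p Hp]. cbn beta in Hp. exists p. lra. }
  assert (Hlow : Q ^ N <= INR n ^ d * mu).
  { apply (trig_poly_mean_ge d b Hb (grid_sum n d F) _ (fun _ => 0));
      [apply trig_poly_grid_sum; auto|].
    intros m. apply grid_sum_bump_prod_pow_ge; auto. }
  assert (INR n ^ d * mu <= INR n ^ d * r ^ N) by (apply Rmult_le_compat_l; [apply pow_le, pos_INR|auto]).
  lra.
Qed.

Lemma Q2R_inject_Z z : Q2R (inject_Z z) = IZR z.
Proof. unfold Q2R; simpl. rewrite Rinv_1. ring. Qed.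

Lemma zdot_succ_l d c x :
  zdot (S d) c x = IZR (c O) * x O + zdot d (fun k => c (S k)) (fun k => x (S k)).
Proof. apply sum_lt_succ_l. Qed.

Lemma rat_independent_Z K a : rat_independent K a ->
  forall c : nat -> Z, zdot K c a = 0 -> forall k, (k < K)%nat -> c k = 0%Z.
Proof.
  intros Ha c Hc k Hk. apply eq_IZR. rewrite <- Q2R_inject_Z.
  apply (Ha (fun k => inject_Z (c k))); auto.
  destruct K as [|K]; [lia|]. replace (S K - 1)%nat with K by lia.
  rewrite sum_f_R0_sum_lt, <- Hc. apply sum_lt_ext. intros; rewrite Q2R_inject_Z; auto.
Qed.

Lemma rat_independent_head_nonzero d a : rat_independent (S d) a -> a O <> 0.
Proof.
  intros Ha E. enough (H : 1%Z = 0%Z) by discriminate.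
  apply (rat_independent_Z _ _ Ha (fun k => match k with O => 1%Z | S _ => 0%Z end)) with (k := O);
    [|lia].
  rewrite zdot_succ_l, zdot_zero, E; [ring|]. intros [k [_ Hk]]. auto.
Qed.

Lemma rat_independent_ratios_nonresonant d a :
  rat_independent (S d) a -> nonresonant d (fun k => a (S k) / a O).
Proof.
  intros Ha c [j [Hj Hcj]] n E. pose proof (rat_independent_head_nonzero d a Ha) as Ha0.
  apply Hcj, (rat_independent_Z _ _ Ha (fun k => match k with O => (- n)%Z | S k => c k end) ) with (k := S j); [|lia].
  rewrite zdot_succ_l. simpl.
  replace (zdot d (fun k => c k) (fun k => a (S k))) with (a O * zdot d c (fun k => a (S k) / a O)).
  - rewrite E, opp_IZR. ring.
  - rewrite <- zdot_scal. unfold zdot. apply sum_lt_ext. intros; field; auto.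
Qed.

Lemma kronecker_flow K a T (t : nat -> R) δ : (0 < K)%nat -> rat_independent K a -> 0 < T -> 0 < δ ->
  exists w, forall k, (k < K)%nat -> exists n : Z, Rabs (w * a k - t k - IZR n * T) < δ.
Proof.
  intros HK Ha HT Hδ. destruct K as [|d]; [lia|].
  pose proof (rat_independent_head_nonzero d a Ha) as Ha0.
  set (b := fun k => a (S k) / a O).
  (* With [w = (t_0 + m T) / a_0] one has [w a_(k+1) = t_(k+1) + T (m b_k + z_k)]. *)
  set (z := fun k => (t O * b k - t (S k)) / T).
  destruct (kronecker d b (rat_independent_ratios_nonresonant d a Ha) z (δ / T)) as [m Hm].
  { apply Rdiv_lt_0_compat; auto. }
  exists ((t O + INR m * T) / a O). intros [|j] Hj.
  - exists (Z.of_nat m). rewrite <- INR_IZR_INZ.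
    replace ((t O + INR m * T) / a O * a O - t O - INR m * T) with 0 by (field; auto).
    rewrite Rabs_R0; auto.
  - destruct (Hm j) as [n Hn]; [lia|]. exists n.
    replace ((t O + INR m * T) / a O * a (S j) - t (S j) - IZR n * T)
      with (T * (INR m * b j + z j - IZR n)) by (unfold z, b; field; lra).
    rewrite Rabs_mult, Rabs_pos_eq by lra.
    apply (Rmult_lt_compat_l T) in Hn; auto.
    replace (T * (δ / T)) with δ in Hn by (field; lra). exact Hn.
Qed.

Definition clamp (x1 x2 x : R) : R := Rmax x1 (Rmin x x2).

Lemma clamp_in x1 x2 x : x1 <= x2 -> x1 <= clamp x1 x2 x <= x2.
Proof. intros H; unfold clamp, Rmax, Rmin; repeat destruct Rle_dec; lra. Qed.

Lemma clamp_id x1 x2 x : x1 <= x <= x2 -> clamp x1 x2 x = x.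
Proof. intros H; unfold clamp, Rmax, Rmin; repeat destruct Rle_dec; lra. Qed.

Lemma clamp_dist x1 x2 x y : x1 <= x2 -> Rabs (clamp x1 x2 x - clamp x1 x2 y) <= Rabs (x - y).
Proof.
  intros H; unfold clamp, Rmax, Rmin; repeat destruct Rle_dec;
    unfold Rabs; repeat destruct Rcase_abs; lra.
Qed.

Section ContinuousOnInterval.

Variables (g : R -> R) (x1 x2 : R).
Hypothesis Hc : continuous_on_interval g x1 x2.

Lemma continuity_clamp_comp : x1 <= x2 -> continuity (fun x => g (clamp x1 x2 x)).
Proof.
  intros H12 a eps He. simpl; unfold R_dist.
  destruct (Hc (clamp x1 x2 a) (clamp_in x1 x2 a H12) eps He) as [δ [Hδ Hd]].
  exists δ; split; auto. intros x [_ Hx]. apply Hd; [apply clamp_in; auto|].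
  eapply Rle_lt_trans; [apply clamp_dist|]; auto.
Qed.

Lemma continuous_on_interval_ivt y1 y2 v : x1 <= y1 <= x2 -> x1 <= y2 <= x2 ->
  g y1 <= v <= g y2 -> exists y, x1 <= y <= x2 /\ g y = v.
Proof.
  intros Hy1 Hy2 Hv. set (h := fun x => g (clamp x1 x2 x) - v).
  assert (Hh : continuity h).
  { apply continuity_minus; [apply continuity_clamp_comp; lra|apply continuity_const; intros ? ?; auto]. }
  assert (Hprod : h y1 * h y2 <= 0) by (unfold h; rewrite !clamp_id by auto; nra).
  assert (Hroot : forall u u', u <= u' -> x1 <= u -> u' <= x2 -> h u * h u' <= 0 ->
    exists y, x1 <= y <= x2 /\ g y = v).
  { intros u u' Hu Hu1 Hu2 Huu. destruct (IVT_cor h u u' Hh Hu Huu) as [y [Hy Hhy]].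
    exists y. split; [lra|]. unfold h in Hhy. rewrite clamp_id in Hhy by lra. lra. }
  destruct (Rle_dec y1 y2).
  - apply (Hroot y1 y2); lra.
  - apply (Hroot y2 y1); [lra|lra|lra|]. rewrite Rmult_comm; auto.
Qed.

Lemma continuous_on_interval_interior_approx y eps : x1 < x2 -> x1 <= y <= x2 -> 0 < eps ->
  exists t, x1 < t < x2 /\ Rabs (g t - g y) < eps.
Proof.
  intros H12 Hy He. destruct (Hc y Hy eps He) as [δ [Hδ Hd]].
  set (s := Rmin (1/2) (δ / (x2 - x1))).
  assert (Hs : 0 < s <= 1/2) by (split; [apply Rmin_glb_lt; [|apply Rdiv_lt_0_compat]|apply Rmin_l]; lra).
  assert (Hsδ : s * (x2 - x1) <= δ).
  { replace δ with (δ / (x2 - x1) * (x2 - x1)) by (field; lra).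
    apply Rmult_le_compat_r; [lra|apply Rmin_r]. }
  set (t := y + s * ((x1 + x2) / 2 - y)).
  exists t. split; [unfold t; split; nra|].
  apply Hd; [unfold t; split; nra|].
  replace (t - y) with (s * ((x1 + x2) / 2 - y)) by (unfold t; ring).
  assert (Rabs ((x1 + x2) / 2 - y) <= (x2 - x1) / 2) by (apply Rabs_le; lra).
  rewrite Rabs_mult, Rabs_pos_eq by lra. nra.
Qed.

Lemma continuous_on_interval_interior_value y1 y2 v eps : x1 < x2 ->
  x1 <= y1 <= x2 -> x1 <= y2 <= x2 -> g y1 <= v <= g y2 -> 0 < eps ->
  exists t, x1 < t < x2 /\ Rabs (g t - v) < eps.
Proof.
  intros H12 Hy1 Hy2 Hv He.
  destruct (continuous_on_interval_ivt y1 y2 v) as [y [Hy <-]]; auto.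
  apply continuous_on_interval_interior_approx; auto.
Qed.

Lemma continuous_on_interval_interior_nbhd t eps : x1 < t < x2 -> 0 < eps ->
  exists δ, 0 < δ /\ forall y, Rabs (y - t) < δ -> Rabs (g y - g t) < eps.
Proof.
  intros Ht He. destruct (Hc t ltac:(lra) eps He) as [δ [Hδ Hd]].
  set (δ' := Rmin δ (Rmin (t - x1) (x2 - t))).
  assert (δ' <= δ /\ δ' <= t - x1 /\ δ' <= x2 - t) as (H1 & H2 & H3).
  { unfold δ'. pose proof (Rmin_l (t - x1) (x2 - t)). pose proof (Rmin_r (t - x1) (x2 - t)).
    pose proof (Rmin_l δ (Rmin (t - x1) (x2 - t))). pose proof (Rmin_r δ (Rmin (t - x1) (x2 - t))). lra. }
  exists δ'. split; [repeat apply Rmin_glb_lt; lra|].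
  intros y Hy. pose proof (Rabs_def2 _ _ Hy). apply Hd; lra.
Qed.

End ContinuousOnInterval.

Lemma exists_common_radius (P : nat -> R -> Prop) K :
  (forall k δ δ', 0 < δ' <= δ -> P k δ -> P k δ') ->
  (forall k, (k < K)%nat -> exists δ, 0 < δ /\ P k δ) ->
  exists δ, 0 < δ /\ forall k, (k < K)%nat -> P k δ.
Proof.
  intros Hmono. induction K as [|K IH]; intros H.
  - exists 1. split; [lra|intros; lia].
  - destruct IH as [δ1 [Hδ1 HP1]]; [intros; apply H; lia|].
    destruct (H K) as [δ2 [Hδ2 HP2]]; [lia|].
    exists (Rmin δ1 δ2). assert (0 < Rmin δ1 δ2) by (apply Rmin_glb_lt; auto).
    split; auto. intros k Hk. destruct (Nat.eq_dec k K) as [->|].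
    + apply (Hmono K δ2); [split; [auto|apply Rmin_r]|auto].
    + apply (Hmono k δ1); [split; [auto|apply Rmin_l]|apply HP1; lia].
Qed.

Theorem lemma19 (K : nat) (a : nat -> R) (g : R -> R) (T x1 x2 M1 M2 : R) :
  (0 < K)%nat ->
  rat_independent K a ->
  (forall x, g (x + T) = g x) ->
  0 < x2 - x1 -> x2 - x1 < T ->
  continuous_on_interval g x1 x2 ->
  (* M1 = min_{[x1,x2]} g, M2 = max_{[x1,x2]} g *)
  (exists y, x1 <= y <= x2 /\ g y = M1) ->
  (forall y, x1 <= y <= x2 -> M1 <= g y) ->
  (exists y, x1 <= y <= x2 /\ g y = M2) ->
  (forall y, x1 <= y <= x2 -> g y <= M2) ->
  forall (xi : nat -> R), (forall k, (k < K)%nat -> M1 <= xi k <= M2) ->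
  forall eps, eps > 0 ->
  exists w : R, forall k, (k < K)%nat -> Rabs (g (w * a k) - xi k) < eps.
Proof.
  intros HK Ha Hper H12 HT Hc [y1 [Hy1 <-]] _ [y2 [Hy2 <-]] _ xi Hxi eps Heps.
  destruct (finite_choice 0 (fun k t => x1 < t < x2 /\ Rabs (g t - xi k) < eps / 2) K) as [t Ht].
  { intros k Hk. apply (continuous_on_interval_interior_value g x1 x2 Hc y1 y2); auto; lra. }
  destruct (exists_common_radius
    (fun k δ => forall y, Rabs (y - t k) < δ -> Rabs (g y - g (t k)) < eps / 2) K) as [δ [Hδ Hnear]].
  { intros k δ δ' Hδ' HP y Hy. apply HP. lra. }
  { intros k Hk. apply continuous_on_interval_interior_nbhd with x1 x2; [auto|apply Ht; auto|lra]. }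
  destruct (kronecker_flow K a T t δ HK Ha ltac:(lra) Hδ) as [w Hw].
  exists w. intros k Hk. destruct (Hw k Hk) as [n Hn].
  rewrite <- (periodic_Z g T Hper (- n) (w * a k)), opp_IZR.
  assert (Hgt : Rabs (g (w * a k + - IZR n * T) - g (t k)) < eps / 2).
  { apply Hnear; auto. replace (w * a k + - IZR n * T - t k) with (w * a k - t k - IZR n * T) by ring.
    auto. }
  destruct (Ht k Hk) as [_ Hxt].
  pose proof (Rabs_triang (g (w * a k + - IZR n * T) - g (t k)) (g (t k) - xi k)).
  replace (g (w * a k + - IZR n * T) - g (t k) + (g (t k) - xi k))
    with (g (w * a k + - IZR n * T) - xi k) in * by ring.
  lra.
Qed.
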